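(* Let $n\ge3$ and let $f$ be a $\gamma_{tr3}(P_3\square P_n)$-function such that the number of vertices $v$ with $f(v)=\emptyset$ is minimum among all $\gamma_{tr3}(P_3\square P_n)$-functions. Then $|f((i,0))|=1$ for every $i\in\{0,1,2\}$ and $|f((0,j))|=1$ for every $j\in\{1,2,\dots,n-1\}$.
   Context: $P_m$ denotes the directed path with vertex set $\{0,1,\dots,m-1\}$ and arcs $(i,i+1)$ for $0\le i\le m-2$. The Cartesian product $D_1\square D_2$ has vertex set $V(D_1)\times V(D_2)$, with an arc from $(x_1,y_1)$ to $(x_2,y_2)$ iff either $(x_1,x_2)$ is an arc of $D_1$ and $y_1=y_2$, or $x_1=x_2$ and $(y_1,y_2)$ is an arc of $D_2$. For a digraph $D$ and positive integer $k$, a $k$-rainbow dominating function on $D$ is $f:V(D)\to\mathcal P(\{1,\dots,k\})$ such that every $v$ with $f(v)=\emptyset$ satisfies $\bigcup_{u\in N^-(v)}f(u)=\{1,\dots,k\}$, where $N^-(v)$ is the set of in-neighbors of $v$; its weight is $\sum_v|f(v)|$. It is total if additionally the subdigraph induced by $\{v:f(v)\ne\emptyset\}$ has no isolated vertex (a vertex with neither in- nor out-neighbors in it). $\gamma_{trk}(D)$ is the minimum weight of a total $k$-rainbow dominating function, and a $\gamma_{trk}(D)$-function is one attaining it. *)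

From mathcomp Require Import all_boot.
Set Implicit Arguments. Unset Strict Implicit. Unset Printing Implicit Defensive.

Definition dpath (m : nat) : rel 'I_m := fun i j => val j == (val i).+1.

Definition cartprod (T1 T2 : finType) (e1 : rel T1) (e2 : rel T2) : rel (T1 * T2) :=
  fun x y => (e1 x.1 y.1 && (x.2 == y.2)) || ((x.1 == y.1) && e2 x.2 y.2).

Definition P3xPn (n : nat) : rel ('I_3 * 'I_n) := cartprod (@dpath 3) (@dpath n).

(* k-rainbow dominating function; colours {1..k} represented by 'I_k.
   (u, v) is an arc iff e u v. *)
Definition is_kRDF (T : finType) (e : rel T) (k : nat) (f : T -> {set 'I_k}) : Prop :=
  forall v : T, f v = set0 -> \bigcup_(u | e u v) f u = [set: 'I_k].

(* total: no vertex with nonempty label is isolated in the induced subdigraph *)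
Definition is_total (T : finType) (e : rel T) (k : nat) (f : T -> {set 'I_k}) : Prop :=
  forall v : T, f v != set0 ->
    exists u : T, u != v /\ f u != set0 /\ (e u v || e v u).

Definition is_TkRDF (T : finType) (e : rel T) (k : nat) (f : T -> {set 'I_k}) : Prop :=
  is_kRDF e f /\ is_total e f.

Definition rweight (T : finType) (k : nat) (f : T -> {set 'I_k}) : nat :=
  \sum_(v : T) #|f v|.

Definition is_gamma_trk_fun (T : finType) (e : rel T) (k : nat) (f : T -> {set 'I_k}) : Prop :=
  is_TkRDF e f /\ forall g : T -> {set 'I_k}, is_TkRDF e g -> rweight f <= rweight g.

Definition n_empty (T : finType) (k : nat) (f : T -> {set 'I_k}) : nat :=
  #|[set v : T | f v == set0]|.

From mathcomp Require Import all_boot zify.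
Set Implicit Arguments. Unset Strict Implicit. Unset Printing Implicit Defensive.

(* Take a minimum-weight total rainbow dominating function with fewest empty
   labels. If a vertex [u] carried more than [maxn 1 e] colours, [e] being the
   number of empty out-neighbours of [u], then relabelling [u] and all those
   neighbours by one colour of [u] would contradict one of the two minimalities.
   In a grid every vertex has at most two out-neighbours, so no label has more
   than two colours. A vertex of the first row or column has a unique
   in-neighbour, which must carry every colour if that vertex is empty; hence
   border vertices are never empty. A border vertex with two colours would have
   two empty out-neighbours, one of them again on the border, so it would also
   carry every colour. *)

Definition empty_out (T : finType) (e : rel T) k (f : T -> {set 'I_k}) (u : T) :
  {set T} := [set v | e u v & f v == set0].

Definition spread (T : finType) (e : rel T) k (f : T -> {set 'I_k}) (u : T)
  (y : 'I_k) : T -> {set 'I_k} :=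
  fun v => if (v == u) || (v \in empty_out e f u) then [set y] else f v.

Section Spread.

Variables (T : finType) (e : rel T) (k : nat) (f : T -> {set 'I_k}) (u : T) (y : 'I_k).
Hypothesis fuy : y \in f u.

Local Notation W := (empty_out e f u).
Local Notation g := (spread e f u y).

Let fu_neq0 : f u != set0.
Proof. by apply/set0Pn; exists y. Qed.

Let u_notin_empty_out : u \notin W.
Proof. by rewrite inE (negbTE fu_neq0) andbF. Qed.

Lemma spread_eq0 v : (g v == set0) = (f v == set0) && ~~ e u v.
Proof.
rewrite /spread inE; have y_neq0 : [set y] != set0 by apply/set0Pn; exists y; rewrite set11.
case: (eqVneq v u) => [->|_] /=; first by rewrite (negbTE y_neq0) (negbTE fu_neq0).
case: (e u v); rewrite /= ?andbT ?andbF //.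
by case: ifP => // _; apply: negbTE.
Qed.

Lemma sub_spread v : v != u -> f v \subset g v.
Proof.
rewrite /spread inE => /negbTE ->; case: ifP => // /andP [_ /eqP ->].
exact: sub0set.
Qed.

Lemma is_TkRDF_spread : is_TkRDF e f -> is_TkRDF e g.
Proof.
move=> [domf totf]; split.
- move=> v /eqP; rewrite spread_eq0 => /andP [/eqP fv0 not_euv].
  apply/eqP; rewrite eqEsubset subsetT -(domf v fv0) /=.
  apply/bigcupsP => x exv; apply: (subset_trans (sub_spread _)).
    by apply: contraNneq not_euv => <-.
  exact: bigcup_sup.
- move=> v gv; case: (eqVneq (f v) set0) => [fv0|fv].
  + move: gv; rewrite spread_eq0 fv0 eqxx /= negbK => euv.
    exists u; split; last by rewrite spread_eq0 (negbTE fu_neq0) euv.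
    by apply: contraTneq fu_neq0 => ->; rewrite fv0 eqxx.
  + have [x [xv [fx exv]]] := totf v fv.
    by exists x; rewrite spread_eq0 (negbTE fx).
Qed.

Lemma rweight_spread : rweight g + #|f u| = rweight f + #|W| + 1.
Proof.
rewrite /rweight (bigD1 u) //= [\sum_v #|f v|](bigD1 u) //= /spread eqxx cards1.
have -> : \sum_(v | v != u) #|g v| = \sum_(v | v != u) #|f v| + \sum_(v | v != u) (v \in W).
  rewrite -big_split; apply: eq_bigr => v /negbTE vu; rewrite /spread vu /=.
  case: ifP => [|_]; last by rewrite addn0.
  by rewrite inE => /andP [_ /eqP ->]; rewrite cards0 cards1.
have -> : \sum_(v | v != u) (v \in W) = #|W|.
  rewrite -sum1_card [RHS]big_mkcond [RHS](bigD1 u) //= (negbTE u_notin_empty_out) add0n.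
  by apply: eq_bigr => v _; case: (v \in W).
set rest := \sum_(v | v != u) #|f v|; lia.
Qed.

Lemma n_empty_spread : n_empty g + #|W| = n_empty f.
Proof.
rewrite /n_empty; have -> : [set v | g v == set0] = [set v | f v == set0] :\: W.
  by apply/setP => v; rewrite !inE spread_eq0; case: (f v == set0); rewrite ?andbT ?andbF.
have sub : W \subset [set v | f v == set0].
  by apply/subsetP => v; rewrite !inE => /andP [].
by rewrite cardsD (setIidPr sub) subnK ?subset_leq_card.
Qed.

End Spread.

Section MinimalEmpty.

Variables (T : finType) (e : rel T) (k : nat) (f : T -> {set 'I_k}).
Hypothesis gamma_f : is_gamma_trk_fun e f.
Hypothesis min_empty_f :
  forall g : T -> {set 'I_k}, is_gamma_trk_fun e g -> n_empty f <= n_empty g.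

Lemma card_label_le_empty_out u : #|f u| <= maxn 1 #|empty_out e f u|.
Proof.
have [->|[y fuy]] := set_0Vmem (f u); first by rewrite cards0.
have T_spread := is_TkRDF_spread fuy gamma_f.1.
have w_spread := rweight_spread e fuy.
have n_spread := n_empty_spread e fuy.
rewrite leqNgt; apply/negP => big_fu.
have le_weight : rweight (spread e f u y) <= rweight f by lia.
have gamma_spread : is_gamma_trk_fun e (spread e f u y).
  by split => // h Th; exact: leq_trans le_weight (gamma_f.2 h Th).
have := min_empty_f gamma_spread; have := gamma_f.2 _ T_spread; lia.
Qed.

End MinimalEmpty.

Lemma kRDF_sole_in_full (T : finType) (e : rel T) k (f : T -> {set 'I_k}) u w :
  is_kRDF e f -> f w = set0 -> e u w -> (forall x, e x w -> x = u) ->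
  f u = [set: 'I_k].
Proof.
move=> domf fw0 euw in_u; rewrite -(domf w fw0) (big_pred1 u) // => x.
by apply/idP/eqP => [/in_u|->].
Qed.

Section Grid.

Variables m n : nat.
Local Notation arc := (cartprod (@dpath m) (@dpath n)).

Definition border (x : 'I_m * 'I_n) := (x.1 == 0 :> nat) || (x.2 == 0 :> nat).

Lemma arc_coord (x y : 'I_m * 'I_n) : arc x y ->
  (y.1 : nat) = x.1.+1 /\ (y.2 : nat) = x.2 \/ (y.1 : nat) = x.1 /\ (y.2 : nat) = x.2.+1.
Proof.
by case/orP => /andP [/eqP h1 /eqP h2]; [left; rewrite h2 | right; rewrite h1].
Qed.

Lemma vertex_eq (x y : 'I_m * 'I_n) : (x.1 : nat) = y.1 -> (x.2 : nat) = y.2 -> x = y.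
Proof. by case: x y => [a b] [c d] /= /val_inj -> /val_inj ->. Qed.

Lemma arc_out_eq (u v w : 'I_m * 'I_n) : arc u v -> arc u w ->
  ((v.2 : nat) == u.2) = ((w.2 : nat) == u.2) -> v = w.
Proof.
move=> /arc_coord hv /arc_coord hw.
by case: hv => -[? ?]; case: hw => -[? ?] dir; apply: vertex_eq; move: dir; lia.
Qed.

Lemma card_out_arc (u : 'I_m * 'I_n) : #|[set v | arc u v]| <= 2.
Proof.
have := @leq_card_in _ bool (fun v : 'I_m * 'I_n => (v.2 : nat) == u.2) [set v | arc u v].
by rewrite card_bool; apply=> v w; rewrite !inE; apply: arc_out_eq.
Qed.

Lemma border_inner_out_eq (u v w : 'I_m * 'I_n) : border u -> arc u v -> arc u w ->
  ~~ border v -> ~~ border w -> v = w.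
Proof.
rewrite /border => bu /arc_coord hv /arc_coord hw nbv nbw; apply: vertex_eq.
  by move: bu nbv nbw; case: hv => -[? ?]; case: hw => -[? ?]; lia.
by move: bu nbv nbw; case: hv => -[? ?]; case: hw => -[? ?]; lia.
Qed.

Lemma card_out_inner_arc (u : 'I_m * 'I_n) :
  border u -> #|[set v | arc u v & ~~ border v]| <= 1.
Proof.
move=> bu; apply/card_le1_eqP => v w; rewrite !inE.
by move=> /andP [uv nbv] /andP [uw nbw]; apply: border_inner_out_eq uw uv nbw nbv.
Qed.

Lemma border_in_unique (w x y : 'I_m * 'I_n) : border w -> arc x w -> arc y w -> x = y.
Proof.
rewrite /border => bw /arc_coord hx /arc_coord hy; apply: vertex_eq.
  by move: bw; case: hx => -[? ?]; case: hy => -[? ?]; lia.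
by move: bw; case: hx => -[? ?]; case: hy => -[? ?]; lia.
Qed.

End Grid.

Section BorderLabels.

Variables (m n k : nat) (f : 'I_m * 'I_n -> {set 'I_k}).
Local Notation arc := (cartprod (@dpath m) (@dpath n)).
Hypothesis k_gt2 : 2 < k.
Hypothesis gamma_f : is_gamma_trk_fun arc f.
Hypothesis min_empty_f :
  forall g : 'I_m * 'I_n -> {set 'I_k}, is_gamma_trk_fun arc g -> n_empty f <= n_empty g.

Lemma card_label_le2 v : #|f v| <= 2.
Proof.
apply: leq_trans (card_label_le_empty_out gamma_f min_empty_f v) _.
rewrite geq_max /=; apply: leq_trans (card_out_arc v); apply: subset_leq_card.
by apply/subsetP => w; rewrite !inE => /andP [].
Qed.

Lemma label_neq_setT v : f v != [set: 'I_k].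
Proof.
apply: contraTneq (card_label_le2 v) => ->.
by rewrite cardsT card_ord -ltnNge.
Qed.

Lemma card_label_border_le1 v : border v -> #|f v| <= 1.
Proof.
move=> bv; rewrite leqNgt; apply/negP => fv_gt1.
have W_gt1 : 1 < #|empty_out arc f v|.
  by have := card_label_le_empty_out gamma_f min_empty_f v; lia.
have /exists_inP [w Ww bw] : [exists w in empty_out arc f v, border w].
  apply: contraTT W_gt1 => /exists_inPn inner; rewrite -leqNgt.
  apply: leq_trans (card_out_inner_arc bv); apply/subset_leq_card/subsetP => x Wx.
  by move: (Wx) (inner x Wx); rewrite !inE => /andP [-> _] ->.
move: Ww; rewrite inE => /andP [vw /eqP fw0].
have := kRDF_sole_in_full gamma_f.1.1 fw0 vw (fun x xw => border_in_unique bw xw vw).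
by apply/eqP; exact: label_neq_setT.
Qed.

Lemma card_label_border v : border v -> #|f v| = 1.
Proof.
move=> bv; apply/eqP; rewrite eqn_leq card_label_border_le1 // card_gt0.
apply/negP => /eqP fv0.
have /set0Pn [c] : [set: 'I_k] != set0 by rewrite -card_gt0 cardsT card_ord; lia.
rewrite -(gamma_f.1.1 v fv0) => /bigcupP [x xv _].
have := kRDF_sole_in_full gamma_f.1.1 fv0 xv (fun y yv => border_in_unique bv yv xv).
by apply/eqP; exact: label_neq_setT.
Qed.

End BorderLabels.

Theorem lemma4p10 (n : nat) (f : 'I_3 * 'I_n -> {set 'I_3}) :
  3 <= n ->
  is_gamma_trk_fun (@P3xPn n) f ->
  (forall g : 'I_3 * 'I_n -> {set 'I_3},
      is_gamma_trk_fun (@P3xPn n) g -> n_empty f <= n_empty g) ->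
  (forall (i : 'I_3) (j : 'I_n), val j = 0 -> #|f (i, j)| = 1) /\
  (forall (j : 'I_n), 1 <= val j -> #|f (ord0, j)| = 1).
Proof.
move=> _ gamma_f min_empty_f.
have border_one := card_label_border (isT : 2 < 3) gamma_f min_empty_f.
by split => [i j j0 | j _]; apply: border_one; rewrite /border /= ?j0 ?orbT.
Qed.
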